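(* For a finite set $F\subseteq\mathbb N$ let $\mathbf x_F$ be the $0$-$1$ sequence with $\mathbf x_F(n)=1$ iff $n\in F$, and let $\mathbb L=\langle\mathbf x_F: F\in\mathbb N^{<\omega}\rangle$. The map $\Phi:\mathcal R\to\mathbb Z^{\mathbb L}$, $\Phi(S)=\langle S(\mathbf x_F):F\in\mathbb N^{<\omega}\rangle$, is a surjective ring homomorphism which maps $\mathcal R^+$ into $\mathbb N^{\mathbb L}$, and its kernel is the ideal $\mathfrak I_1$, which consists exactly of the series $S\in\mathcal R$ whose associated squarefree series $S'$ is $0$.
   Context: Let $\mathbb N=\{0,1,2,\dots\}$ and $\mathbb N^{<\omega}$ the set of finite subsets of $\mathbb N$. Indeterminates $t_0,t_1,\dots$; $\mathbf A$ is the set of eventually zero sequences $\mathbf a=(a_0,a_1,\dots)$ of non-negative integers; $t^{\mathbf a}=\prod_it_i^{a_i}$. $\mathcal R$ is the ring of formal series $S=\sum_{\mathbf a}n_{\mathbf a}t^{\mathbf a}$ ($n_{\mathbf a}\in\mathbb Z$) for which there are $d_n\in\mathbb N$ with $n_{\mathbf a}=0$ whenever $a_n>d_n$ for some $n$, and $b\in\mathbb N$ with $|n_{\mathbf a}|\le b(\sum_ia_i)!/\prod_ia_i!$ for all $\mathbf a$. $\mathcal R^+$ is the set of nonzero series in $\mathcal R$ with all coefficients non-negative. For a sequence $\mathbf x$ of reals, $S(\mathbf x)$ denotes the value of $S$ when $x_n$ is assigned to $t_n$. For $\mathbf a$ let $supp(\mathbf a)=\{n:a_n\ne0\}$ and $t_F=\prod_{n\in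 F}t_n$ for $F\in\mathbb N^{<\omega}$. The associated squarefree series of $S=\sum n_{\mathbf a}t^{\mathbf a}$ is $S'=\sum_{F\in\mathbb N^{<\omega}}\big(\sum_{supp(\mathbf a)=F}n_{\mathbf a}\big)t_F$. $\mathfrak I_1$ is the ideal of $\mathcal R$ generated by $\{S-S':S\in\mathcal R^+\}$. *)

From mathcomp Require Import all_boot all_algebra.
From mathcomp Require Import finmap multiset.
From mathcomp Require Import boolp classical_sets fsbigop.
Set Implicit Arguments. Unset Strict Implicit. Unset Printing Implicit Defensive.
Import GRing.Theory Num.Theory.
Local Open Scope ring_scope.

(* Exponent sequences a in A: eventually-zero sequences of naturals,
   i.e. finitely supported maps nat -> nat (multisets over nat);
   a n is the exponent a_n of t_n. *)
Definition mon := multiset nat.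

(* A formal series S = sum_a n_a t^a is its coefficient function. *)
Definition series := mon -> int.

Definition supp (a : mon) : {fset nat} := finsupp a.

Definition deg (a : mon) : nat := (\sum_(i <- finsupp a) a i)%N.
Definition multinom (a : mon) : nat :=
  ((deg a)`! %/ \prod_(i <- finsupp a) (a i)`!)%N.

Definition in_R (S : series) : Prop :=
  (exists d : nat -> nat, forall a : mon, (exists n, (d n < a n)%N) -> S a = 0)
  /\ (exists b : nat, forall a : mon, (absz (S a) <= b * multinom a)%N).

Definition in_Rplus (S : series) : Prop :=
  in_R S /\ (exists a, S a != 0) /\ (forall a, 0 <= S a).

Definition zeroS : series := fun _ => 0.
Definition oneS : series := fun a => (a == mset0)%:R.
Definition addS (S T : series) : series := fun a => S a + T a.
Definition subS (S T : series) : series := fun a => S a - T a.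
Definition mulS (S T : series) : series := fun a =>
  \sum_(p \in [set p : mon * mon | (p.1 `+` p.2)%mset = a]%classic) S p.1 * T p.2.

Definition montm (a : mon) (x : nat -> int) : int :=
  \prod_(n <- finsupp a) x n ^+ a n.
Definition evalS (S : series) (x : nat -> int) : int :=
  \sum_(a \in [set: mon]%classic) S a * montm a x.

Definition xF (F : {fset nat}) : nat -> int := fun n => (n \in F)%:R.

(* Phi : R -> Z^L, with L = {x_F : F finite} indexed by F *)
Definition Phi (S : series) : {fset nat} -> int := fun F => evalS S (xF F).

(* associated squarefree series S' = sum_F (sum_{supp a = F} n_a) t_F :
   the coefficient of t^a is 0 unless a = t_F (all exponents <= 1), in which
   case it is sum_{supp b = supp a} n_b. *)
Definition sqfS (S : series) : series := fun a =>
  if [forall n : supp a, a (val n) == 1%N]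
  then \sum_(b \in [set b : mon | supp b = supp a]%classic) S b
  else 0.

Definition sumS (s : seq series) : series := foldr addS zeroS s.

(* the ideal I_1 of R generated by {T - T' : T in R^+}:
   finite R-linear combinations of such generators *)
Definition in_I1 (S : series) : Prop :=
  exists s : seq (series * series),
    (forall i, (i < size s)%N -> in_R (nth (zeroS, zeroS) s i).1 /\ in_Rplus (nth (zeroS, zeroS) s i).2) /\
    S = sumS [seq mulS p.1 (subS p.2 (sqfS p.2)) | p <- s].

From mathcomp Require Import all_boot all_algebra.
From mathcomp Require Import finmap multiset.
From mathcomp Require Import boolp classical_sets functions fsbigop.
From mathcomp Require Import zify.
Set Implicit Arguments. Unset Strict Implicit. Unset Printing Implicit Defensive.
Import order.Order.TTheory GRing.Theory Num.Theory.
Local Open Scope fset_scope.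
Local Open Scope ring_scope.

(* Evaluating t^a at x_F gives 1 if supp a is contained in F and 0 otherwise, so
   Phi S F is the sum of the coefficients n_a with supp a in F, i.e. the sum over
   the subsets G of F of c_S(G) = sum_(supp a = G) n_a, the coefficient of t_G in
   S'.  The exponent bounds defining R make all these sums finite, and Phi is a
   ring homomorphism.  By Moebius inversion over finite sets, Phi S = 0 iff
   c_S = 0 iff S' = 0; in particular Phi S' = Phi S, so the generators T - T' of
   I_1 lie in the kernel.  Conversely, if S' = 0 write S = P - N with P, N in R^+;
   then P' = N' and S = (P - P') - (N - N') lies in I_1.  For surjectivity,
   Moebius inversion gives the values c(G) that the coefficients c_S(G) must take,
   and each c(G) is realised by |c(G)| coefficients +-1, which keeps the
   coefficients of S bounded. *)

(** * Finite sums and Moebius inversion *)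

Lemma fsum_fset_cover (T : choiceType) (V : zmodType) (A : set T) (R : {fset T})
    (f : T -> V) :
  (forall x, A x -> f x != 0 -> x \in R) ->
  \sum_(x \in A) f x = \sum_(x <- R | x \in A) f x.
Proof.
move=> cover; rewrite fsbig_mkcond (fsbigTE R) => [|x xR]; first by rewrite [RHS]big_mkcond.
rewrite /patch; case: ifPn => // /set_mem Ax.
by apply/eqP; apply: contraNT xR; apply: cover.
Qed.

Lemma big_pred1_fset (K : choiceType) (V : zmodType) (A : {fset K}) (x : K) (v : V) :
  \sum_(y <- A | x == y) v = if x \in A then v else 0.
Proof.
case: ifPn => xA; last by rewrite big1_seq // => y /andP[/eqP <-]; rewrite (negbTE xA).
rewrite big_mkcond (big_fsetD1 x) //= eqxx big1_seq ?addr0 // => y.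
by rewrite in_fsetD1 => /andP[_ /andP[yx _]]; rewrite eq_sym (negbTE yx).
Qed.

Section PowersetInversion.
Variables (K : choiceType) (V : zmodType).
Implicit Types (f c : {fset K} -> V) (F G H : {fset K}).

Lemma powerset_sum_eq0 c :
  (forall F, \sum_(G <- fpowerset F) c G = 0) -> forall G, c G = 0.
Proof.
move=> c0 G; elim: {G}_.+1 {-2}G (ltnSn #|`G|) => // n IH G ltGn.
have := c0 G; rewrite (big_fsetD1 G) ?fpowersetE //= big1_seq ?addr0 // => H.
rewrite in_fsetD1 fpowersetE => /andP[_ /andP[HG HsubG]]; apply: IH.
have : (#|`H| < #|`G|)%N by apply: fproper_ltn_card; rewrite fproperEneq HG.
by move: ltGn; lia.
Qed.

(* The recursion only descends to proper subsets, so #|G|.+1 steps suffice. *)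
Fixpoint mobius_rec f n G : V :=
  if n is n'.+1 then f G - \sum_(H <- fpowerset G `\ G) mobius_rec f n' H else 0.

Definition mobius f G : V := mobius_rec f #|`G|.+1 G.

Lemma mobius_rec_fuel f n m G :
  (#|`G| < n)%N -> (#|`G| < m)%N -> mobius_rec f n G = mobius_rec f m G.
Proof.
elim: n m G => [|n IH] [|m] G //= ltGn ltGm; congr (_ - _); apply: eq_big_seq => H.
rewrite !inE fpowersetE => /andP[HG HsubG].
have ltHG : (#|`H| < #|`G|)%N by apply: fproper_ltn_card; rewrite fproperEneq HG.
by apply: IH; apply: leq_trans ltHG _.
Qed.

Lemma sum_mobius f F : \sum_(G <- fpowerset F) mobius f G = f F.
Proof.
rewrite (big_fsetD1 F) ?fpowersetE //= {1}/mobius /= addrC.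
rewrite [X in _ + (_ - X)](eq_big_seq (mobius f)) ?subrKC // => H.
rewrite !inE fpowersetE => /andP[HF HsubF]; apply: mobius_rec_fuel => //.
by apply: fproper_ltn_card; rewrite fproperEneq HF.
Qed.

End PowersetInversion.

Lemma supp_mset0 : supp mset0 = fset0.
Proof. by apply/fsetP => n; rewrite mem_finsupp mset0E inE. Qed.

Lemma supp_eq0 (a : mon) : supp a = fset0 -> a = mset0.
Proof.
move=> a0; apply/msetP => n; rewrite mset0E; apply/eqP.
by rewrite -[_ == _]negbK -mem_finsupp -/(supp a) a0.
Qed.

Lemma supp_msetD (x y : mon) : supp (x `+` y)%mset = supp x `|` supp y.
Proof. by apply/fsetP => n; rewrite !inE !msuppE in_msetD. Qed.

Lemma montm_xF (a : mon) (F : {fset nat}) : montm a (xF F) = (supp a `<=` F)%:R.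
Proof.
rewrite /montm /xF; have [/fsubsetP aF|/fsubsetPn [n na nF]] := boolP (supp a `<=` F).
  by rewrite big_seq big1 // => n /aF ->; rewrite expr1n.
rewrite (bigD1_seq n) //= (negbTE nF) expr0n.
by move: na; rewrite mem_finsupp => /negbTE ->; rewrite mul0r.
Qed.

Lemma bounded_mons_cover (d : nat -> nat) (s : seq nat) :
  exists R : {fset mon}, forall a : mon,
    (forall n, (a n <= d n)%N) -> {subset supp a <= s} -> a \in R.
Proof.
elim: s => [|x s [R IH]].
  exists [fset mset0] => a _ sub; rewrite in_fset1; apply/eqP/msetP => n.
  by rewrite mset0E; apply/eqP; rewrite -[_ == _]negbK -mem_finsupp; apply/negP => /sub.
exists [fset (msetn j x `+` b)%mset | j in iota 0 (d x).+1, b in R] => a ad sub.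
apply/imfset2P; exists (a x); first by rewrite mem_iota ltnS ad.
exists (a `\` msetn (a x) x)%mset.
  apply: IH => [n|n]; first by rewrite msetE2 (leq_trans (leq_subr _ _) (ad n)).
  rewrite mem_finsupp msetE2 msetnE; have [->|nx] := eqVneq n x; first by rewrite subnn eqxx.
  by rewrite subn0 -mem_finsupp => /sub; rewrite inE (negbTE nx).
by apply/msetP => n; rewrite !msetE2 msetnE; case: eqP => [->|_]; rewrite ?subnn ?addn0 ?subnKC.
Qed.

Lemma multinom_mset0 : multinom mset0 = 1%N.
Proof. by rewrite /multinom /deg -/(supp mset0) supp_mset0 !big_seq_fset0. Qed.

Lemma leq_fact_mul m n : (m`! * n`! <= (m + n)`!)%N.
Proof.
rewrite -(bin_fact (leq_addr n m)) addKn.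
by rewrite -[X in (X <= _)%N]mul1n leq_mul2r bin_gt0 leq_addr orbT.
Qed.

Lemma leq_prod_fact (I : Type) (r : seq I) (f : I -> nat) :
  (\prod_(i <- r) (f i)`! <= (\sum_(i <- r) f i)`!)%N.
Proof.
elim: r => [|x r IH]; first by rewrite !big_nil.
by rewrite !big_cons (leq_trans _ (leq_fact_mul _ _)) // leq_mul2l IH orbT.
Qed.

Lemma multinom_gt0 a : (0 < multinom a)%N.
Proof. by rewrite divn_gt0 ?leq_prod_fact // prodn_gt0 // => i; rewrite fact_gt0. Qed.

(** * Locally finite series *)

Lemma in_RP S : in_R S <->
  (exists d : nat -> nat, forall a n, S a != 0 -> (a n <= d n)%N) /\
  (exists b : nat, forall a, `|S a| <= (b * multinom a)%:R :> int).
Proof.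
have boundE b a : (absz (S a) <= b * multinom a)%N = (`|S a| <= (b * multinom a)%:R :> int).
  by rewrite natz -lez_nat abszE.
split=> [[[d Sd] [b Sb]]|[[d Sd] [b Sb]]].
  split; last by exists b => a; rewrite -boundE.
  by exists d => a n; rewrite leqNgt; apply: contraNN => lt; apply/eqP/Sd; exists n.
split; last by exists b => a; rewrite boundE.
by exists d => a [n]; apply/contraTeq; rewrite -leqNgt; apply: Sd.
Qed.

Definition covers (S : series) (F : {fset nat}) (R : {fset mon}) : Prop :=
  forall a, supp a `<=` F -> S a != 0 -> a \in R.

(* evalS is a finitely supported sum, which is 0 by convention on an infinite
   support; Phi only behaves on series that are finite over every finite F. *)
Definition locally_finite (S : series) : Prop := forall F, exists R, covers S F R.

Lemma covers0 F : covers zeroS F fset0.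
Proof. by move=> a _; rewrite eqxx. Qed.

Lemma covers_fsubset S F R R' : R `<=` R' -> covers S F R -> covers S F R'.
Proof. by move=> /fsubsetP RR' cS a aF /(cS a aF)/RR'. Qed.

Lemma coversS S F G R : G `<=` F -> covers S F R -> covers S G R.
Proof. by move=> GF cS a aG; apply: cS; apply: fsubset_trans GF. Qed.

Lemma covers_fsetU S T U F R1 R2 :
  (forall a, S a = 0 -> T a = 0 -> U a = 0) ->
  covers S F R1 -> covers T F R2 -> covers U F (R1 `|` R2).
Proof.
move=> U0 cS cT a aF; rewrite inE; apply: contraNT.
by case/norP => /(contraNN (cS a aF))/negPn/eqP S0 /(contraNN (cT a aF))/negPn/eqP T0; rewrite U0.
Qed.

Lemma locally_finite_combine S T U :
  (forall a, S a = 0 -> T a = 0 -> U a = 0) ->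
  locally_finite S -> locally_finite T -> locally_finite U.
Proof.
move=> U0 lS lT F; have [R1 c1] := lS F; have [R2 c2] := lT F.
by exists (R1 `|` R2); apply: covers_fsetU c1 c2.
Qed.

Lemma in_R_locally_finite S : in_R S -> locally_finite S.
Proof.
move=> /in_RP[[d Sd] _] F; have [R cR] := bounded_mons_cover d F.
by exists R => a /fsubsetP aF Sa; apply: cR => // n; apply: Sd.
Qed.

Lemma mulS_cover S T a (P : {fset mon * mon}) :
  (forall p, (p.1 `+` p.2)%mset = a -> S p.1 != 0 -> T p.2 != 0 -> p \in P) ->
  mulS S T a = \sum_(p <- P | (p.1 `+` p.2)%mset == a) S p.1 * T p.2.
Proof.
move=> cover; rewrite /mulS (fsum_fset_cover (R := P)) => [|p /= pa].
  by apply: eq_bigl => p; apply/idP/eqP => [/set_mem|pa]; last exact: mem_set.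
by rewrite mulf_eq0 negb_or => /andP[]; apply: cover.
Qed.

Definition pairs_in (F : {fset nat}) (RS RT : {fset mon}) : {fset mon * mon} :=
  [fset ((x, y) : mon * mon) | x in [fset x in RS | supp x `<=` F],
                               y in [fset y in RT | supp y `<=` F]].

Lemma mem_pairs_in F RS RT p : (p \in pairs_in F RS RT) =
  [&& p.1 \in RS, supp p.1 `<=` F, p.2 \in RT & supp p.2 `<=` F].
Proof.
apply/imfset2P/idP => [[x + [y + ->]]|]; first by rewrite !inE /= => /andP[-> ->] /andP[-> ->].
case: p => x y /and4P /= [xR xF yR yF].
by exists x; rewrite ?inE ?xR ?xF //; exists y; rewrite ?inE ?yR ?yF.
Qed.

Section MulCover.
Variables (S T : series) (F : {fset nat}) (RS RT : {fset mon}).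
Hypotheses (cS : covers S F RS) (cT : covers T F RT).

Lemma mulS_pairs_in a : supp a `<=` F ->
  mulS S T a = \sum_(p <- pairs_in F RS RT | (p.1 `+` p.2)%mset == a) S p.1 * T p.2.
Proof.
move=> aF; apply: mulS_cover => p pa Sp Tp.
move: aF; rewrite -pa supp_msetD fsubUset mem_pairs_in => /andP[F1 F2].
by rewrite (cS F1 Sp) (cT F2 Tp) F1 F2.
Qed.

Lemma covers_mulS :
  covers (mulS S T) F [fset (p.1 `+` p.2)%mset | p in pairs_in F RS RT].
Proof.
move=> a aF; rewrite mulS_pairs_in //; apply: contraNT => aR.
by rewrite big1_seq // => p /andP[/eqP pa pP]; move: aR; rewrite -pa => /negP[]; apply: in_imfset.
Qed.

End MulCover.

Lemma locally_finite_mulS S T :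
  locally_finite S -> locally_finite T -> locally_finite (mulS S T).
Proof.
move=> lS lT F; have [RS cS] := lS F; have [RT cT] := lT F.
by exists [fset (p.1 `+` p.2)%mset | p in pairs_in F RS RT]; apply: covers_mulS.
Qed.

Lemma Phi_cover S F R : covers S F R ->
  Phi S F = \sum_(a <- R | supp a `<=` F) S a.
Proof.
move=> cover; rewrite /Phi /evalS (fsbigTE R) => [|a aR].
  rewrite [RHS]big_mkcond; apply: eq_bigr => a _.
  by rewrite montm_xF; case: ifP; rewrite ?mulr1 ?mulr0.
rewrite montm_xF; case: (boolP (supp a `<=` F)) => [aF|]; last by rewrite mulr0.
by apply/eqP; rewrite mulr1; apply: contraNT aR; apply: cover.
Qed.

Lemma Phi0 F : Phi zeroS F = 0.
Proof. by rewrite (Phi_cover (@covers0 F)) big_mkcond big_seq_fset0. Qed.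

Lemma Phi_one F : Phi oneS F = 1.
Proof.
rewrite (@Phi_cover _ _ [fset mset0]) => [|a _]; last by rewrite /oneS in_fset1; case: (a == mset0).
by rewrite big_mkcond big_seq_fset1 supp_mset0 fsub0set /oneS eqxx.
Qed.

Lemma Phi_ge0 S F : (forall a, 0 <= S a) -> 0 <= Phi S F.
Proof. by move=> S_ge0; apply: fsumr_ge0 => a _; rewrite montm_xF mulr_ge0. Qed.

Lemma Phi_add S T F : locally_finite S -> locally_finite T ->
  Phi (addS S T) F = Phi S F + Phi T F.
Proof.
move=> lS lT; have [R1 c1] := lS F; have [R2 c2] := lT F.
rewrite (Phi_cover (covers_fsetU _ c1 c2)) => [|a S0 T0]; last by rewrite /addS S0 T0 addr0.
rewrite (Phi_cover (covers_fsubset (fsubsetUl R1 R2) c1)).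
by rewrite (Phi_cover (covers_fsubset (fsubsetUr R1 R2) c2)) -big_split.
Qed.

Lemma Phi_sub S T F : locally_finite S -> locally_finite T ->
  Phi (subS S T) F = Phi S F - Phi T F.
Proof.
move=> lS lT; have [R1 c1] := lS F; have [R2 c2] := lT F.
rewrite (Phi_cover (covers_fsetU _ c1 c2)) => [|a S0 T0]; last by rewrite /subS S0 T0 subr0.
rewrite (Phi_cover (covers_fsubset (fsubsetUl R1 R2) c1)).
by rewrite (Phi_cover (covers_fsubset (fsubsetUr R1 R2) c2)) -sumrB.
Qed.

Lemma Phi_mul S T F : locally_finite S -> locally_finite T ->
  Phi (mulS S T) F = Phi S F * Phi T F.
Proof.
move=> lS lT; have [RS cS] := lS F; have [RT cT] := lT F.
have RF a : a \in [fset (p.1 `+` p.2)%mset | p in pairs_in F RS RT] -> supp a `<=` F.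
  by case/imfsetP => p /= + ->; rewrite mem_pairs_in supp_msetD fsubUset => /and4P[_ -> _ ->].
rewrite (Phi_cover cS) (Phi_cover cT) big_distrlr /= pair_big_dep_cond.
rewrite (partition_big_imfset _ (fun p => p.1 `+` p.2)%mset) (Phi_cover (covers_mulS cS cT)).
rewrite big_seq_cond [RHS]big_seq; apply: eq_big => [a|a /andP[aR _]].
  by case: (boolP (a \in _)) => //= /RF.
exact/(mulS_pairs_in cS cT)/RF.
Qed.

(** * Squarefree parts and the kernel of Phi *)

Definition sq (G : {fset nat}) : mon := seq_mset G.

Lemma sqE G n : sq G n = (n \in G) :> nat.
Proof. by rewrite /sq mset_seqE count_uniq_mem // fset_uniq. Qed.

Lemma supp_sq G : supp (sq G) = G.
Proof. by apply/fsetP => n; rewrite mem_finsupp sqE; case: (n \in G). Qed.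

Definition sqf_coef (S : series) (G : {fset nat}) : int :=
  \sum_(b \in [set b : mon | supp b = G]%classic) S b.

Lemma sqfSE S a : sqfS S a = if a == sq (supp a) then sqf_coef S (supp a) else 0.
Proof.
rewrite /sqfS; congr (if _ then _ else _); apply/forallP/eqP => [a1|{2}->].
  apply/msetP => n; rewrite sqE; case: (boolP (n \in supp a)) => [na|].
    exact/eqP/(a1 [` na]).
  by rewrite mem_finsupp negbK => /eqP.
by case=> n /= na; rewrite sqE na.
Qed.

Lemma sqfS_sq S G : sqfS S (sq G) = sqf_coef S G.
Proof. by rewrite sqfSE supp_sq eqxx. Qed.

Lemma sqf_coef_cover S G R : covers S G R ->
  sqf_coef S G = \sum_(b <- R | supp b == G) S b.
Proof.
move=> cS; rewrite /sqf_coef (fsum_fset_cover (R := R)) => [|b /= bG].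
  by apply: eq_bigl => b; apply/idP/eqP => [/set_mem|bG]; last exact: mem_set.
by apply: cS; rewrite bG.
Qed.

Lemma Phi_sqf_coef S F : locally_finite S ->
  Phi S F = \sum_(G <- fpowerset F) sqf_coef S G.
Proof.
move=> lS; have [R cS] := lS F.
rewrite (Phi_cover cS) (eq_big_seq (fun G => \sum_(b <- R | supp b == G) S b)) => [|G].
  under [RHS]eq_bigr do rewrite big_mkcond.
  rewrite big_mkcond exchange_big /=; apply: eq_bigr => b _.
  by rewrite -big_mkcond big_pred1_fset fpowersetE.
by rewrite fpowersetE => GF; rewrite (sqf_coef_cover (coversS GF cS)).
Qed.

Lemma sqfS_eq0 S : sqfS S = zeroS <-> forall G, sqf_coef S G = 0.
Proof.
split => [S0 G|S0]; first by rewrite -sqfS_sq S0.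
by apply: funext => a; rewrite sqfSE S0; case: ifP.
Qed.

Lemma Phi_eq0 S : locally_finite S ->
  Phi S = (fun _ => 0) <-> forall G, sqf_coef S G = 0.
Proof.
move=> lS; split => [S0|S0].
  by apply: powerset_sum_eq0 => F; rewrite -Phi_sqf_coef // S0.
by apply: funext => F; rewrite Phi_sqf_coef // big1.
Qed.

Lemma locally_finite_sqfS S : locally_finite (sqfS S).
Proof.
move=> F; exists [fset sq G | G in fpowerset F] => a aF; rewrite sqfSE.
have [aE _|_] := eqVneq a (sq (supp a)); last by rewrite eqxx.
by rewrite aE; apply: in_imfset; rewrite fpowersetE.
Qed.

Lemma sqf_coef_sqfS S G : sqf_coef (sqfS S) G = sqf_coef S G.
Proof.
rewrite /sqf_coef (fsum_fset_cover (R := [fset sq G])) => [|b /= bG].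
  by rewrite big_mkcond big_seq_fset1 mem_set /= ?sqfS_sq ?supp_sq.
by rewrite sqfSE bG in_fset1; case: (b == sq G); rewrite ?eqxx.
Qed.

Lemma Phi_sqfS S : locally_finite S -> Phi (sqfS S) = Phi S.
Proof.
move=> lS; apply: funext => F; rewrite !Phi_sqf_coef //; last exact: locally_finite_sqfS.
by apply: eq_bigr => G _; rewrite sqf_coef_sqfS.
Qed.

Lemma sqfS_sub S T : locally_finite S -> locally_finite T ->
  sqfS (subS S T) = subS (sqfS S) (sqfS T).
Proof.
move=> lS lT; apply: funext => a; rewrite /subS !sqfSE; case: ifP => _; last by rewrite subr0.
have [R1 c1] := lS (supp a); have [R2 c2] := lT (supp a).
rewrite (sqf_coef_cover (covers_fsetU _ c1 c2)) => [|b S0 T0]; last by rewrite S0 T0 subr0.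
rewrite (sqf_coef_cover (covers_fsubset (fsubsetUl R1 R2) c1)).
by rewrite (sqf_coef_cover (covers_fsubset (fsubsetUr R1 R2) c2)) -sumrB.
Qed.

Definition I1_generator (p : series * series) : series := mulS p.1 (subS p.2 (sqfS p.2)).

Lemma locally_finite_sub_sqfS B : locally_finite B -> locally_finite (subS B (sqfS B)).
Proof.
move=> lB; apply: locally_finite_combine lB (locally_finite_sqfS B) => a B0 B'0.
by rewrite /subS B0 B'0 subr0.
Qed.

Lemma locally_finite_I1_generator A B : locally_finite A -> locally_finite B ->
  locally_finite (I1_generator (A, B)).
Proof. by move=> lA /locally_finite_sub_sqfS; apply: locally_finite_mulS. Qed.

Lemma Phi_I1_generator A B : locally_finite A -> locally_finite B ->
  Phi (I1_generator (A, B)) = (fun _ => 0).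
Proof.
move=> lA lB; apply: funext => F; rewrite /I1_generator /=.
rewrite Phi_mul ?Phi_sub ?Phi_sqfS ?subrr ?mulr0 //.
  exact: locally_finite_sqfS.
exact: locally_finite_sub_sqfS.
Qed.

Lemma in_I1_Phi_eq0 S : in_I1 S -> Phi S = (fun _ => 0).
Proof.
case=> s [gens ->]; suff [] : locally_finite (sumS (map I1_generator s)) /\
    Phi (sumS (map I1_generator s)) = (fun _ => 0) by [].
elim: s gens => [|[A B] s IH] gens /=.
  by split=> [F|]; [exists fset0; apply: covers0 | apply: funext; apply: Phi0].
have [/in_R_locally_finite lA [/in_R_locally_finite lB _]] := gens 0%N isT.
have [ls Ps] := IH (fun i => gens i.+1); have lG := locally_finite_I1_generator lA lB.
split; first by apply: locally_finite_combine lG ls => a G0 s0; rewrite /addS G0 s0 addr0.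
by apply: funext => F; rewrite Phi_add // Phi_I1_generator // Ps addr0.
Qed.

Lemma in_R_dom S T : in_R S -> (forall a, `|T a| <= `|S a|) -> in_R T.
Proof.
move=> /in_RP[[d Sd] [b Sb]] TS; apply/in_RP; split.
  exists d => a n Ta; apply: Sd; apply: contraNneq Ta => Sa0.
  by have := TS a; rewrite Sa0 normr0 normr_le0.
by exists b => a; apply: le_trans (TS a) (Sb a).
Qed.

Lemma in_R_addS S T : in_R S -> in_R T -> in_R (addS S T).
Proof.
move=> /in_RP[[dS Sd] [bS Sb]] /in_RP[[dT Td] [bT Tb]]; apply/in_RP; split.
  exists (fun n => maxn (dS n) (dT n)) => a n; rewrite /addS leq_max.
  have [S0|/Sd -> //] := eqVneq (S a) 0; rewrite S0 add0r => /Td ->; exact: orbT.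
exists (bS + bT)%N => a; rewrite mulnDl natrD.
by apply: le_trans (ler_normD _ _) (lerD (Sb a) (Tb a)).
Qed.

Definition coef (c : int) : series := fun a => c * oneS a.

Lemma in_R_coef c : in_R (coef c).
Proof.
apply/in_RP; split.
  exists (fun=> 0%N) => a n; rewrite /coef /oneS.
  by have [->|_] := eqVneq a mset0; rewrite ?mset0E ?mulr0 ?eqxx.
exists `|c|%N => a; rewrite /coef /oneS.
have [->|_] := eqVneq a mset0; last by rewrite mulr0 normr0.
by rewrite multinom_mset0 muln1 mulr1 natz abszE.
Qed.

Lemma mulS_coef c X a : mulS (coef c) X a = c * X a.
Proof.
rewrite (@mulS_cover _ _ _ [fset (mset0, a)]) => [|[x y] /= <-].
  by rewrite big_mkcond big_seq_fset1 /= mset0D eqxx /coef /oneS eqxx mulr1.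
rewrite /coef /oneS in_fset1; have [->|_] := eqVneq x mset0; first by rewrite mset0D.
by rewrite /= mulr0n mulr0 eqxx.
Qed.

(* Adding the constant 1 makes P and N nonzero, so that both lie in R^+. *)
Lemma sqfS_eq0_in_I1 S : in_R S -> sqfS S = zeroS -> in_I1 S.
Proof.
move=> RS S'0.
pose P : series := addS (fun a => `|S a|) (coef 1).
pose N : series := subS P S.
have RP : in_R P by apply: in_R_addS (in_R_coef 1); apply: in_R_dom RS _ => a; rewrite normr_id.
have RN : in_R N by apply: in_R_addS RP _; apply: in_R_dom RS _ => a; rewrite normrN.
have P_ge0 a : 0 <= P a by rewrite /P /addS /coef mul1r addr_ge0 ?normr_ge0 ?ler0n.
have N_ge0 a : 0 <= N a.
  by rewrite subr_ge0 (le_trans (ler_norm _)) // lerDl /coef mul1r ler0n.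
have P0 : P mset0 != 0.
  by rewrite /P /addS /coef /oneS eqxx mul1r gt_eqF // ltr_wpDl.
have N0 : N mset0 != 0.
  rewrite /N /subS /P /addS /coef /oneS eqxx mul1r gt_eqF //.
  by rewrite addrAC ltr_wpDl // subr_ge0 ler_norm.
exists [:: (coef 1, P); (coef (-1), N)]; split.
  case=> [|[|//]] _ /=; (split; first exact: in_R_coef).
    by split; [|split; [exists mset0|]].
  by split; [|split; [exists mset0|]].
have [lP lS] := (in_R_locally_finite RP, in_R_locally_finite RS).
apply: funext => a; rewrite /= /addS /zeroS !mulS_coef /N sqfS_sub // S'0 /subS /zeroS.
by rewrite addr0 mul1r mulN1r subr0 opprB addrA subrK opprB addrC subrK.
Qed.

(** * Surjectivity *)

Definition max_elt (G : {fset nat}) : nat := (\max_(i <- G) i)%N.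

Lemma max_elt_ge (G : {fset nat}) (i : nat) : i \in G -> (i <= max_elt G)%N.
Proof. by move=> iG; rewrite /max_elt (leq_bigmax_seq (F := id)). Qed.

Lemma max_elt_mem (G : {fset nat}) (i : nat) : i \in G -> max_elt G \in G.
Proof.
move=> iG; have [//|m0] : max_elt G \in G \/ max_elt G = 0%N.
  rewrite /max_elt big_seq.
  elim/big_rec: _ => [|j m jG [mG|->]]; [by right | | by left; rewrite maxn0].
  by left; rewrite /maxn; case: ltnP.
by move: (max_elt_ge iG); rewrite m0 leqn0 => /eqP <-.
Qed.

Definition spread_mon (G : {fset nat}) (k : nat) : mon :=
  (sq G `+` msetn k (max_elt G))%mset.

Lemma spread_monE (G : {fset nat}) (k n : nat) :
  spread_mon G k n = ((n \in G) + (n == max_elt G) * k)%N.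
Proof. by rewrite msetE2 msetnE sqE; case: eqP; rewrite ?mul1n ?mul0n. Qed.

Lemma supp_spread_mon (G : {fset nat}) (k i : nat) : i \in G -> supp (spread_mon G k) = G.
Proof.
move=> iG; apply/fsetP => n; rewrite mem_finsupp spread_monE.
case: (boolP (n \in G)) => nG //; have nmax : n != max_elt G.
  by apply: contraNneq nG => ->; apply: max_elt_mem iG.
by rewrite (negbTE nmax).
Qed.

Lemma spread_mon_max (G : {fset nat}) (k i : nat) :
  i \in G -> spread_mon G k (max_elt G) = k.+1.
Proof. by move=> iG; rewrite spread_monE (max_elt_mem iG) eqxx mul1n. Qed.

(* A series with prescribed coefficients c G of t_G in its squarefree part: c G
   is spread as |c G| coefficients sgz (c G) on the monomials t_G t_m^k, with
   m = max G and k < |c G|.  Only t_m carries a large exponent, and only for the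
   finitely many G contained in [0, m], so all exponents stay bounded. *)
Definition spread (c : {fset nat} -> int) (a : mon) : int :=
  if a == mset0 then c fset0
  else if [exists k : 'I_`|c (supp a)|, a == spread_mon (supp a) k]
       then sgz (c (supp a)) else 0.

Lemma sqf_coef_spread (c : {fset nat} -> int) (G : {fset nat}) :
  sqf_coef (spread c) G = c G.
Proof.
have [->|[i iG]] := fset_0Vmem G.
  rewrite /sqf_coef (fsum_fset_cover (R := [fset mset0 : mon])) => [|a /= a0].
    by rewrite big_mkcond big_seq_fset1 /spread eqxx mem_set //= supp_mset0.
  by rewrite in_fset1 (supp_eq0 a0) eqxx.
have spread_mon_neq0 k : spread_mon G k <> mset0.
  by move=> /(congr1 supp); rewrite (supp_spread_mon k iG) supp_mset0 => G0; rewrite G0 in iG.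
have spread_mon_inj : injective (spread_mon G).
  by move=> k1 k2 /(congr1 (fun a : mon => a (max_elt G))); rewrite !(spread_mon_max _ iG) => -[].
rewrite /sqf_coef (fsum_fset_cover (R := [fset spread_mon G (@nat_of_ord _ k) | k : 'I_`|c G|]))
  => [|a /= aG].
  rewrite big_mkcond big_imfset /= => [|k1 k2 _ _ /spread_mon_inj/val_inj //].
  rewrite big_enum /= (eq_bigr (fun=> sgz (c G))) => [|k _].
    by rewrite sumr_const card_ord -mulr_natr natz -intEsg.
  rewrite mem_set; last by rewrite /= (supp_spread_mon k iG).
  rewrite /spread (supp_spread_mon k iG); case: eqP => [/spread_mon_neq0 //|_].
  by case: existsP => // -[]; exists k.
rewrite /spread aG; have [a0|_] := eqVneq a mset0; first by move: iG; rewrite -aG a0 supp_mset0.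
by case: existsP => // -[k /eqP ->] _; apply/imfsetP; exists k.
Qed.

Lemma in_R_spread (c : {fset nat} -> int) : in_R (spread c).
Proof.
apply/in_RP; split.
  pose d n := (\max_(G <- fpowerset [fset j | j in iota 0 n.+1]) `|c G|)%N.
  exists (fun n => (d n).+1) => a n; rewrite /spread; have [->|a0] := eqVneq a mset0.
    by rewrite mset0E.
  case: existsP => [[k /eqP aE] _|]; last by rewrite eqxx.
  have [G0|[i iG]] := fset_0Vmem (supp a); first by case/eqP: a0; apply: supp_eq0.
  rewrite aE spread_monE; have [nmax|_] := eqVneq n (max_elt (supp a)); last first.
    by rewrite mul0n addn0 (leq_trans (leq_b1 _)).
  rewrite nmax (max_elt_mem iG) mul1n add1n ltnS (leq_trans (ltnW (ltn_ord k))) //.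
  apply: (leq_bigmax_seq (F := fun G => `|c G|%N)) => //; rewrite fpowersetE.
  by apply/fsubsetP => j ja; apply/imfsetP; exists j; rewrite // mem_iota ltnS max_elt_ge.
exists `|c fset0|.+1 => a; rewrite /spread; have [->|_] := eqVneq a mset0.
  by rewrite multinom_mset0 muln1 natz -abszE lez_nat leqnSn.
case: existsP => _; last by rewrite normr0.
rewrite (le_trans (_ : _ <= 1)) // ?ler1n ?muln_gt0 ?multinom_gt0 //.
by case: sgzP; rewrite ?normr0 ?normr1 ?normrN.
Qed.

Lemma Phi_spread (c : {fset nat} -> int) F :
  Phi (spread c) F = \sum_(G <- fpowerset F) c G.
Proof.
rewrite Phi_sqf_coef; last exact/in_R_locally_finite/in_R_spread.
by apply: eq_bigr => G _; rewrite sqf_coef_spread.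
Qed.

Theorem lemma2p4 :
  (forall S T : series, in_R S -> in_R T ->
     Phi (addS S T) = (fun F => Phi S F + Phi T F) /\
     Phi (mulS S T) = (fun F => Phi S F * Phi T F)) /\
  Phi oneS = (fun _ => 1) /\
  (forall f : {fset nat} -> int, exists S : series, in_R S /\ Phi S = f) /\
  (forall S : series, in_Rplus S -> forall F : {fset nat}, 0 <= Phi S F) /\
  (forall S : series, in_R S ->
     (Phi S = (fun _ => 0) <-> in_I1 S) /\ (in_I1 S <-> sqfS S = zeroS)).
Proof.
split.
  move=> S T /in_R_locally_finite lS /in_R_locally_finite lT.
  by split; apply: funext => F; [exact: Phi_add | exact: Phi_mul].
split; first by apply: funext => F; apply: Phi_one.
split.
  move=> f; exists (spread (mobius f)); split; first exact: in_R_spread.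
  by apply: funext => F; rewrite Phi_spread sum_mobius.
split; first by move=> S [_ [_ S_ge0]] F; apply: Phi_ge0.
move=> S RS; have lS := in_R_locally_finite RS.
have [Phi_sqf _] := iff_trans (Phi_eq0 lS) (iff_sym (sqfS_eq0 S)).
have I1_ker := @in_I1_Phi_eq0 S; have ker_I1 := sqfS_eq0_in_I1 RS.
split; first by split=> [/Phi_sqf/ker_I1|/I1_ker].
by split=> [/I1_ker/Phi_sqf|/ker_I1].
Qed.
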